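(* Let $n,b$ be integers with $1<n<b$, let $C_0$ be a directed cycle of the $(n,b)$-mother graph $M$, and let $\Gamma_0$ be an edge-labelled subgraph of the $(n,b)$-Hoey-Sloane graph $\Gamma$. Then $\Gamma_0$ is the cycle image of $C_0$ if and only if $\overline{\Gamma}_0$ is the cycle image of $\overline{C}_0$.
   Context: Let $\lambda(x)$ denote the least non-negative residue of $x$ modulo $b$. The $(n,b)$-mother graph $M$ is the directed graph on vertex set $\{0,\ldots,b-1\}$ whose edges are the ordered pairs of digits $(d_1,d_2)$ with $\lambda(d_1+(b-n)d_2)\le n-1$; a directed cycle of $M$ (loops allowed) is regarded as its set of edges. The $(n,b)$-Hoey-Sloane graph $\Gamma$ is the edge-labelled directed graph on states $\{0,\ldots,n-1\}$ in which $(c_1,c_2)$ is an edge precisely when $\{(d_1,d_2)\in E(M)\mid n d_2-d_1+c_1=b c_2\}$ is nonempty, this set being its label set. For a digit $d$ put $\overline d=b-1-d$ and for a state $c$ put $\overline c=n-1-c$. The reflection of a cycle $C_0$ is $\overline{C}_0=\{(\overline{d}_1,\overline{d}_2)\mid (d_1,d_2)\in C_0\}$. The cycle image of a directed cycle $C_0$ of $M$ is the edge-labelled subgraph of $\Gamma$ whose edges are the pairs $(c_1,c_2)$ for which $\mathscr{E}=\{(d_1,d_2)\in C_0\mid n d_2-d_1+c_1=b c_2\}$ is nonempty, with label set $\mathscr{E}$, and whose vertices are the states that are endpoints of such edges. The reflection $\overline{\Gamma}_0$ of an edge-labelled subgraph $\Gamma_0$ of $\Gamma$ has vertices $\overline{c}$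 ($c$ a vertex of $\Gamma_0$), edges $(\overline{c}_1,\overline{c}_2)$ ($(c_1,c_2)$ an edge of $\Gamma_0$), and label $(\overline{d}_1,\overline{d}_2)$ on $(\overline{c}_1,\overline{c}_2)$ whenever $(d_1,d_2)$ labels $(c_1,c_2)$ in $\Gamma_0$. *)

From mathcomp Require Import all_boot.
Set Implicit Arguments. Unset Strict Implicit. Unset Printing Implicit Defensive.

Section HS.
Variables n b : nat.

Definition digit := 'I_b.
Definition state := 'I_n.

(* lambda(x) = x mod b ; all quantities below are non-negative naturals *)
Definition M_edge (d1 d2 : 'I_b) : bool := (d1 + (b - n) * d2) %% b <= n - 1.

Definition M_edges : {set 'I_b * 'I_b} := [set e | M_edge e.1 e.2].

(* the transition condition  n d2 - d1 + c1 = b c2, rewritten in nat *)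
Definition trans (c1 c2 : 'I_n) (d1 d2 : 'I_b) : bool :=
  n * d2 + c1 == b * c2 + d1.

Definition is_dcycle (C : {set 'I_b * 'I_b}) : Prop :=
  exists s : seq 'I_b,
    [/\ s != [::], uniq s, cycle M_edge s & C = [set e in zip s (rot 1 s)]].

(* Edge-labelled subgraphs of Gamma: vertex set, edge set, and the set of
   (edge, label) incidences; the label set of an edge e is [set l | (e,l) \in L]. *)
Record lgraph := LGraph {
  lg_V : {set 'I_n};
  lg_E : {set 'I_n * 'I_n};
  lg_L : {set ('I_n * 'I_n) * ('I_b * 'I_b)} }.

Definition HS_label (c1 c2 : 'I_n) : {set 'I_b * 'I_b} :=
  [set d in M_edges | trans c1 c2 d.1 d.2].

Definition HS_edges : {set 'I_n * 'I_n} := [set c | HS_label c.1 c.2 != set0].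

Definition is_lsubgraph (G : lgraph) : Prop :=
  [/\ (forall c, c \in lg_E G -> (c.1 \in lg_V G) && (c.2 \in lg_V G)),
      lg_E G \subset HS_edges,
      (forall c l, (c, l) \in lg_L G -> (c \in lg_E G) && (l \in HS_label c.1 c.2)) &
      (forall c, c \in lg_E G -> exists l, (c, l) \in lg_L G)].

Definition cimg_label (C0 : {set 'I_b * 'I_b}) (c1 c2 : 'I_n) : {set 'I_b * 'I_b} :=
  [set d in C0 | trans c1 c2 d.1 d.2].

Definition cycle_image (C0 : {set 'I_b * 'I_b}) : lgraph :=
  let E := [set c | cimg_label C0 c.1 c.2 != set0] in
  LGraph [set v | [exists c in E, (c.1 == v) || (c.2 == v)]]
         E
         [set p | (p.1 \in E) && (p.2 \in cimg_label C0 p.1.1 p.1.2)].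

Definition refl_d (d : 'I_b * 'I_b) : 'I_b * 'I_b := (rev_ord d.1, rev_ord d.2).
Definition refl_c (c : 'I_n * 'I_n) : 'I_n * 'I_n := (rev_ord c.1, rev_ord c.2).

Definition refl_cycle (C0 : {set 'I_b * 'I_b}) : {set 'I_b * 'I_b} := refl_d @: C0.

Definition refl_graph (G : lgraph) : lgraph :=
  LGraph (@rev_ord n @: lg_V G) (refl_c @: lg_E G)
         ((fun p => (refl_c p.1, refl_d p.2)) @: lg_L G).

End HS.

From mathcomp Require Import all_boot zify.
Set Implicit Arguments. Unset Strict Implicit. Unset Printing Implicit Defensive.

(* Reflecting digits d |-> b-1-d and states c |-> n-1-c changes the sign of
   n d2 - d1 + c1 - b c2 (the constants cancel), so it preserves the transition
   relation. Hence reflecting the cycle image of C0 yields the cycle image of the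
   reflected cycle, and the equivalence follows because reflection of labelled
   graphs is an involution. *)

Section Reflection.
Variables n b : nat.

Lemma refl_dK : involutive (@refl_d b).
Proof. by case=> d1 d2; rewrite /refl_d /= !rev_ordK. Qed.

Lemma refl_cK : involutive (@refl_c n).
Proof. by case=> c1 c2; rewrite /refl_c /= !rev_ordK. Qed.

Lemma trans_rev (c1 c2 : 'I_n) (d1 d2 : 'I_b) :
  trans (rev_ord c1) (rev_ord c2) (rev_ord d1) (rev_ord d2) = trans c1 c2 d1 d2.
Proof.
rewrite /trans /= !mulnBr.
have := ltn_ord c1; have := ltn_ord c2; have := ltn_ord d1; have := ltn_ord d2.
by move=> *; apply/eqP/eqP; nia.
Qed.

Lemma cimg_label_refl_cycle (C0 : {set 'I_b * 'I_b}) (c1 c2 : 'I_n) :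
  cimg_label (refl_cycle C0) c1 c2
  = @refl_d b @: cimg_label C0 (rev_ord c1) (rev_ord c2).
Proof.
apply/setP=> d.
by rewrite /refl_cycle /cimg_label !(can_imset_pre _ refl_dK) !inE /= trans_rev.
Qed.

Lemma refl_incidenceK :
  involutive (fun p : ('I_n * 'I_n) * ('I_b * 'I_b) => (refl_c p.1, refl_d p.2)).
Proof. by move=> [c d] /=; rewrite refl_cK refl_dK. Qed.

Lemma refl_graph_cycle_image (C0 : {set 'I_b * 'I_b}) :
  refl_graph (cycle_image n C0) = cycle_image n (refl_cycle C0).
Proof.
set E := [set c : 'I_n * 'I_n | cimg_label C0 c.1 c.2 != set0].
have reflE : @refl_c n @: E = [set c | cimg_label (refl_cycle C0) c.1 c.2 != set0].
  apply/setP=> c.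
  by rewrite (can_imset_pre _ refl_cK) !inE cimg_label_refl_cycle imset_eq0.
rewrite /refl_graph /cycle_image /= -/E -reflE; congr LGraph.
- apply/setP=> v; rewrite (can_imset_pre _ rev_ordK) !inE (can_imset_pre _ refl_cK).
  apply/existsP/existsP=> -[c /andP[Ec endc]]; exists (refl_c c).
    by rewrite inE refl_cK Ec /= !(can2_eq rev_ordK rev_ordK).
  by rewrite inE in Ec; rewrite Ec /= !(inj_eq rev_ord_inj).
- apply/setP=> -[c d]; rewrite (can_imset_pre _ refl_incidenceK) !inE /=.
  rewrite reflE inE cimg_label_refl_cycle imset_eq0 trans_rev.
  by rewrite /refl_cycle (can_imset_pre _ refl_dK) inE.
Qed.

Lemma refl_graphK : involutive (@refl_graph n b).
Proof.
case=> V E L; rewrite /refl_graph /=.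
by congr LGraph; rewrite -imset_comp
  ?(eq_imset _ rev_ordK, eq_imset _ refl_cK, eq_imset _ refl_incidenceK) imset_id.
Qed.

End Reflection.

Theorem corollary13 (n b : nat) (hn : 1 < n) (hnb : n < b)
  (C0 : {set 'I_b * 'I_b}) (G0 : lgraph n b) :
  is_dcycle n C0 -> is_lsubgraph G0 ->
  (G0 = cycle_image n C0 <-> refl_graph G0 = cycle_image n (refl_cycle C0)).
Proof.
move=> _ _; rewrite -refl_graph_cycle_image.
by split=> [-> | /(can_inj (@refl_graphK n b))].
Qed.
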